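(* Let $X$ be a finite group with a normal subgroup $N$ and a complement $G$ to $N$ in $X$ (so $X=N{:}G$), and let $Y\leq X$ be core-free such that the transitive permutation group $X$ acting on the right cosets of $Y$ is elusive. Identify $G$ with $X/N$ via the quotient map, and let $H$ be the subgroup of $G$ corresponding to $YN/N$. Suppose $H$ is core-free in $G$. Then $G$, acting transitively on the right cosets of $H$, is elusive.
   Context: A derangement is a permutation with no fixed points. A transitive permutation group is elusive if it contains no derangements of prime order. *)

From mathcomp Require Import all_boot all_fingroup all_solvable.
Set Implicit Arguments. Unset Strict Implicit. Unset Printing Implicit Defensive.
Local Open Scope group_scope.

Definition coset_kernel (gT : finGroupType) (X Y : {group gT}) : {group gT} :=
  'C_X(rcosets Y X | 'Rs)%G.

(* Order of the permutation of rcosets Y X induced by x. *)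
Definition perm_order (gT : finGroupType) (X Y : {group gT}) (x : gT) : nat :=
  #[coset (coset_kernel X Y) x].

Definition derangement (gT : finGroupType) (X Y : {group gT}) (x : gT) : bool :=
  'Fix_(rcosets Y X | 'Rs)[x] == set0.

Definition elusive (gT : finGroupType) (X Y : {group gT}) : Prop :=
  [transitive X, on rcosets Y X | 'Rs] /\
  forall x, x \in X -> prime (perm_order X Y x) -> ~~ derangement X Y x.

Definition core_free (gT : finGroupType) (X Y : {group gT}) : bool :=
  gcore Y X == 1.

From mathcomp Require Import all_boot all_fingroup all_solvable.
Local Open Scope group_scope.

(* Both actions are faithful (the point stabilisers are core-free), so the
   permutation order of an element is its order. An element g fixes the coset Y z exactly when g lies in Y^z. If
   g in G lies in Y^z with z = n x, n in N, x in G, then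
   g^(x^-1) = (g^(z^-1))^n lies in G and in <Y, N>, so g fixes the coset
   (G :&: <Y, N>) x. *)

Lemma perm_order_core_free (gT : finGroupType) (X Y : {group gT}) x :
  core_free X Y -> perm_order X Y x = #[x].
Proof.
move/eqP=> cfY; rewrite /perm_order.
have -> : coset_kernel X Y = 1%G.
  apply/val_inj/eqP; rewrite /= eqEsubset sub1G andbT.
  by rewrite -cfY -astabRs_rcosets subsetIr.
by rewrite (order_injm (coset1_injm gT)) //= norm1 inE.
Qed.

Lemma rcoset_fixed (gT : finGroupType) (Y : {group gT}) (z x : gT) :
  (Y :* z :* x == Y :* z) = (x \in Y :^ z).
Proof.
rewrite -rcosetM mem_conjg conjgE invgK mulgA -mem_rcoset.
exact: sameP eqP rcoset_eqP.
Qed.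

Lemma derangementPn (gT : finGroupType) (X Y : {group gT}) x :
  reflect (exists2 z, z \in X & x \in Y :^ z) (~~ derangement X Y x).
Proof.
rewrite /derangement; apply: (iffP (set0Pn _)) => [[C] | [z Xz Yzx]].
  rewrite inE => /andP[/rcosetsP[z Xz ->] /afix1P /= fixC].
  by exists z; rewrite // -rcoset_fixed -rcosetE fixC.
exists (Y :* z); rewrite inE; apply/andP; split.
  by rewrite mem_rcosets -[z]mul1g mem_mulg.
by apply/afix1P; rewrite /= rcosetE; apply/eqP; rewrite rcoset_fixed.
Qed.

Lemma mem_conj_meet_join (gT : finGroupType) (N G Y : {group gT}) g n x :
  g \in G -> n \in N -> x \in G -> g \in Y :^ (n * x) ->
  g \in (G :&: (Y <*> N)) :^ x.
Proof.
move=> Gg Nn Gx; rewrite !mem_conjg => Yg.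
have YNg : g ^ x^-1 \in Y <*> N.
  have -> : g ^ x^-1 = (g ^ (n * x)^-1) ^ n by rewrite invMg conjgM conjgKV.
  by rewrite groupJ ?mem_gen // inE ?Yg ?Nn ?orbT.
by rewrite inE groupJ ?groupV.
Qed.

Theorem lemma5p4 (gT : finGroupType) (X N G Y : {group gT}) :
  N <| X -> N ><| G = X ->
  Y \subset X -> core_free X Y -> elusive X Y ->
  core_free G (G :&: (Y <*> N))%G ->
  elusive G (G :&: (Y <*> N))%G.
Proof.
move=> _ defX _ cfY [_ elusiveY] cfH; split; first exact: transRs_rcosets.
have [_ defNG _ _] := sdprodP defX.
move=> g Gg; rewrite perm_order_core_free // => prime_g.
have Xg : g \in X by rewrite -defNG -[g]mul1g mem_mulg.
have /derangementPn[z] : ~~ derangement X Y g.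
  by apply: elusiveY; rewrite ?perm_order_core_free.
rewrite -defNG => /mulsgP[n x Nn Gx ->] Yg.
by apply/derangementPn; exists x; last exact: mem_conj_meet_join Yg.
Qed.
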